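(* Let $T$ be an $n\times n$ complex matrix with distinct eigenvalues $\lambda_1,\dots,\lambda_n$. Let $u_1,\dots,u_n$ be unit eigenvectors of $T$ with $Tu_i=\lambda_iu_i$, and let $v_1,\dots,v_n$ be unit eigenvectors of $T^*$ with $T^*v_i=\overline{\lambda_i}v_i$. If there exist complex numbers $\alpha_1,\dots,\alpha_n$ of modulus one such that \[ \langle u_i,u_j\rangle=\overline{\alpha_i}\,\alpha_j\,\langle v_j,v_i\rangle \] for all $1\le i<j\le n$, then $T$ is unitarily equivalent to a complex symmetric matrix.
   Context: $\langle\cdot,\cdot\rangle$ is the standard inner product on $\mathbb{C}^n$, linear in the first argument. A complex symmetric matrix is a square complex matrix $S$ with $S=S^t$. Two matrices $A,B\in M_n(\mathbb{C})$ are unitarily equivalent if $A=W^*BW$ for some unitary $W$. *)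

From mathcomp Require Import all_boot all_algebra.
From mathcomp Require Export reals complex.
Set Implicit Arguments. Unset Strict Implicit. Unset Printing Implicit Defensive.
Import GRing.Theory Num.Theory.
Local Open Scope ring_scope.

Section Defs.
Variable C : numClosedFieldType.

(* standard inner product on C^n, linear in the first argument *)
Definition inner (n : nat) (x y : 'cV[C]_n) : C := \sum_(k < n) x k 0 * (y k 0)^*.

Definition adjmx (m n : nat) (A : 'M[C]_(m, n)) : 'M[C]_(n, m) := (map_mx Num.conj A)^T.

Definition unit_vec (n : nat) (x : 'cV[C]_n) : Prop := inner x x = 1.

Definition unitary_mx (n : nat) (W : 'M[C]_n) : Prop :=
  adjmx W *m W = 1%:M /\ W *m adjmx W = 1%:M.

Definition complex_symmetric (n : nat) (S : 'M[C]_n) : Prop := S^T = S.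

Definition unitarily_equiv (n : nat) (A B : 'M[C]_n) : Prop :=
  exists W : 'M[C]_n, unitary_mx W /\ A = adjmx W *m B *m W.
End Defs.

(* Put the eigenvectors in the columns of U and V and let D = diag(alpha).
   The hypothesis says conj(U^* U) = (V D)^* (V D), so M := V D (conj U)^-1 is
   unitary; it satisfies M conj(T) = T^* M; and since (conj U)^T V commutes with
   diag(conj lam), which has distinct entries, it is diagonal, which makes M
   symmetric.  A symmetric unitary M has a symmetric unitary square root N,
   and then S := conj(N) T N is complex symmetric with T = N S conj(N). *)

From mathcomp Require Import all_boot all_algebra reals complex.
Import GRing.Theory Num.Theory Num.Def.
Set Implicit Arguments. Unset Strict Implicit. Unset Printing Implicit Defensive.
Local Open Scope ring_scope.

Section CommDiag.
Variables (R : idomainType) (n : nat).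
Implicit Types (X : 'M[R]_n) (d : 'rV[R]_n).

Lemma comm_diag_mx_neq0 X d i j :
  comm_mx X (diag_mx d) -> X i j != 0 -> d 0 i = d 0 j.
Proof.
move=> /matrixP/(_ i j); rewrite mul_mx_diag mul_diag_mx !mxE => XdX Xij.
by apply: (mulfI Xij); rewrite XdX mulrC.
Qed.

Lemma comm_diag_mx_is_diag X d :
  injective (d 0) -> comm_mx X (diag_mx d) -> is_diag_mx X.
Proof.
move=> dI Xd; apply/is_diag_mxP => i j; apply: contraNeq.
by move=> /(comm_diag_mx_neq0 Xd)/dI ->.
Qed.

Lemma comm_diag_mx_map X d (f : R -> R) :
  comm_mx X (diag_mx d) -> comm_mx X (diag_mx (map_mx f d)).
Proof.
move=> Xd; apply/matrixP => i j; rewrite mul_mx_diag mul_diag_mx !mxE.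
have [->|/(comm_diag_mx_neq0 Xd) ->] := eqVneq (X i j) 0.
  by rewrite mulr0 mul0r.
by rewrite mulrC.
Qed.
End CommDiag.

Lemma eigenvector_cols_unitmx (F : fieldType) n (A P : 'M[F]_n) (lam : 'I_n -> F) :
  injective lam -> (forall k, col k P != 0) ->
  (forall k, A *m col k P = lam k *: col k P) -> P \in unitmx.
Proof.
move=> lamI Pnz Plam; rewrite -unitmx_tr unitmxE unitfE.
apply/negP => /det0P [c /negP c0 cP]; apply: c0.
(* The rows of P^T lie in eigenspaces of A^T, whose sum is direct. *)
have dxE : mxdirect (\sum_k eigenspace A^T (lam k)).
  by apply: mxdirect_sum_eigenspace; exact: in2W.
have eigP k : (row k P^T <= eigenspace A^T (lam k))%MS.
  by apply/eigenspaceP; rewrite -tr_col -trmx_mul Plam linearZ.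
have [Z _ _ uniqZ] := sub_dsumsmx dxE (sub0mx 1 (\sum_k eigenspace A^T (lam k))%MS).
have ceq0 k : c 0 k *: row k P^T = 0.
  have -> : c 0 k *: row k P^T = Z k.
    apply: (uniqZ (fun i => c 0 i *: row i P^T)) => [i _||//].
      by rewrite scalemx_sub.
    by rewrite -mulmx_sum_row cP.
  by symmetry; apply: (uniqZ (fun=> 0)) => [i _||//]; rewrite ?sub0mx ?big1.
apply/eqP/rowP => k; rewrite mxE; apply/eqP.
by have /eqP := ceq0 k; rewrite scaler_eq0 -tr_col trmx_eq0 (negPf (Pnz k)) orbF.
Qed.

Lemma symmetric_mulmxV (R : comUnitRingType) n (A B : 'M[R]_n) :
  B \in unitmx -> (B^T *m A)^T = B^T *m A -> (A *m invmx B)^T = A *m invmx B.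
Proof.
move=> Bu BAsym.
have -> : A *m invmx B = invmx B^T *m (B^T *m A) *m invmx B.
  by rewrite mulmxA mulVmx ?unitmx_tr // mul1mx.
move: (B^T *m A) BAsym => K Ksym.
by rewrite !trmx_mul Ksym !trmx_inv trmxK mulmxA.
Qed.

Definition mx_of_cols (R : Type) m p (w : 'I_p -> 'cV[R]_m) : 'M[R]_(m, p) :=
  \matrix_(i, k) w k i 0.

Lemma col_mx_of_cols (R : Type) m p (w : 'I_p -> 'cV[R]_m) k :
  col k (mx_of_cols w) = w k.
Proof. by apply/colP => i; rewrite !mxE. Qed.

Lemma mx_of_cols_eigen (R : comRingType) n (A : 'M[R]_n) (w : 'I_n -> 'cV[R]_n)
    (lam : 'I_n -> R) :
  (forall k, A *m w k = lam k *: w k) ->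
  A *m mx_of_cols w = mx_of_cols w *m diag_mx (\row_k lam k).
Proof.
move=> Aw; apply/matrixP => i k; rewrite mul_mx_diag !mxE mulrC.
move/matrixP: (Aw k) => /(_ i 0); rewrite !mxE => <-.
by apply: eq_bigr => j _; rewrite mxE.
Qed.

Section ConjugateTranspose.
Variable C : numClosedFieldType.
Local Open Scope sesquilinear_scope.

Lemma adjmxE m n (A : 'M[C]_(m, n)) : adjmx A = A ^t*.
Proof. by rewrite /adjmx map_trmx. Qed.

Lemma unitary_mxP n (W : 'M[C]_n) : unitary_mx W <-> W \is unitarymx.
Proof.
rewrite /unitary_mx !adjmxE; split=> [[_ /unitarymxP] //|WU].
by split; [apply: mulmx1C|]; apply/unitarymxP.
Qed.

Lemma trmxC_mul m n p (A : 'M[C]_(m, n)) (B : 'M[C]_(n, p)) :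
  (A *m B) ^t* = B ^t* *m A ^t*.
Proof. by rewrite trmx_mul map_mxM. Qed.

Lemma inner_conj n (x y : 'cV[C]_n) : (inner x y)^* = inner y x.
Proof.
rewrite /inner rmorph_sum; apply: eq_bigr => k _.
by rewrite rmorphM /= conjCK mulrC.
Qed.

Lemma inner_map_conj n (x y : 'cV[C]_n) :
  inner (map_mx conjC x) (map_mx conjC y) = inner y x.
Proof.
rewrite -[RHS]inner_conj rmorph_sum; apply: eq_bigr => k _.
by rewrite !mxE rmorphM.
Qed.

Lemma innerZ n a b (x y : 'cV[C]_n) :
  inner (a *: x) (b *: y) = a * b^* * inner x y.
Proof.
rewrite /inner mulr_sumr; apply: eq_bigr => k _.
by rewrite !mxE rmorphM /= mulrACA.
Qed.

Lemma mulmx_trmxC_inner m n p (A : 'M[C]_(m, n)) (B : 'M[C]_(m, p)) i j :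
  (A ^t* *m B) i j = inner (col j B) (col i A).
Proof. by rewrite mxE; apply: eq_bigr => k _; rewrite !mxE mulrC. Qed.

Lemma unitarymx_mulmxV n (A B : 'M[C]_n) :
  B \in unitmx -> A ^t* *m A = B ^t* *m B -> A *m invmx B \is unitarymx.
Proof.
move=> Bu AB; apply/unitarymxP/mulmx1C.
rewrite trmxC_mul -mulmxA (mulmxA (A ^t*)) AB !mulmxA -trmxC_mul mulmxV //.
by rewrite trmx1 map_mx1 mul1mx mulmxV.
Qed.

Lemma diag_unitarymxP n (d : 'rV[C]_n) :
  reflect (forall i, `|d 0 i| = 1) (diag_mx d \is unitarymx).
Proof.
have ddC : diag_mx d *m (diag_mx d) ^t* = diag_mx (\row_i `|d 0 i| ^+ 2).
  apply/matrixP => i j; rewrite tr_diag_mx map_diag_mx mul_diag_mx !mxE.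
  by case: eqVneq => [->|_]; rewrite ?mulr1n ?mulr0n ?mulr0 // normCK.
apply: (iffP unitarymxP) => [|d1]; rewrite ddC; last first.
  by apply/matrixP => i j; rewrite !mxE d1 expr1n.
move=> /matrixP dd i; have := dd i i; rewrite !mxE eqxx mulr1n => /eqP.
by rewrite sqrp_eq1 ?normr_ge0 // => /eqP.
Qed.

Lemma unitary_conj_diag_map n (P Q : 'M[C]_n) (d : 'rV[C]_n) (f : C -> C) :
  P \is unitarymx -> Q \is unitarymx ->
  P ^t* *m diag_mx d *m P = Q ^t* *m diag_mx d *m Q ->
  P ^t* *m diag_mx (map_mx f d) *m P = Q ^t* *m diag_mx (map_mx f d) *m Q.
Proof.
move=> /unitarymxP PU /unitarymxP QU PdQ.
pose X := Q *m P ^t*.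
have Xd : comm_mx X (diag_mx d).
  have := congr1 (fun Y => Q *m Y *m P ^t*) PdQ.
  by rewrite /= !mulmxA QU mul1mx -!mulmxA PU mulmx1 /comm_mx !mulmxA => ->.
have XP : X *m P = Q by rewrite -mulmxA (mulmx1C PU) mulmx1.
have QX : Q ^t* *m X = P ^t* by rewrite mulmxA (mulmx1C QU) mul1mx.
clearbody X.
transitivity (Q ^t* *m (X *m diag_mx (map_mx f d)) *m P).
  by rewrite mulmxA QX.
by rewrite (comm_diag_mx_map f Xd) !mulmxA -(mulmxA _ X) XP.
Qed.

Lemma symmetric_unitary_sqrt n (M : 'M[C]_n) : M \is unitarymx -> M^T = M ->
  exists N : 'M[C]_n, [/\ N \is unitarymx, N^T = N & N *m N = M].
Proof.
move=> MU MT; have MtM := mulmx1C (unitarymxP MU).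
have /orthomx_spectralP : M \is normalmx.
  by apply/normalmxP; rewrite (unitarymxP MU) MtM.
rewrite invmx_unitary ?spectral_unitarymx //.
move: (spectralmx M) (spectral_diag M) (spectral_unitarymx M) => P d PU Md.
have d1 i : `|d 0 i| = 1.
  apply/diag_unitarymxP; have -> : diag_mx d = P *m M *m P ^t*.
    by rewrite Md !mulmxA (unitarymxP PU) mul1mx mulmxtVK.
  by rewrite !mul_unitarymx ?trmxC_unitary.
pose s := map_mx sqrtC d.
have s1 i : `|s 0 i| = 1.
  by rewrite mxE; apply/eqP; rewrite -sqrp_eq1 ?normr_ge0 // -normrX sqrtCK d1.
have ss : diag_mx s *m diag_mx s = diag_mx d.
  apply/matrixP => i j; rewrite mul_diag_mx !mxE.
  by case: eqVneq => [->|_]; rewrite ?mulr1n ?mulr0n ?mulr0 // -expr2 sqrtCK.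
pose Q := P ^ conjC.
have QU : Q \is unitarymx by rewrite conjC_unitary.
have QtC : Q ^t* = P^T by rewrite map_trmx map_mxCK.
have trPdP (e : 'rV_n) : (P ^t* *m diag_mx e *m P)^T = Q ^t* *m diag_mx e *m Q.
  by rewrite !trmx_mul tr_diag_mx QtC map_trmx trmxK mulmxA.
(* M^T = M is a second spectral decomposition of M, with the unitary conj P. *)
exists (P ^t* *m diag_mx s *m P); split.
- by rewrite !mul_unitarymx ?trmxC_unitary //; apply/diag_unitarymxP.
- rewrite trPdP; symmetry; apply: unitary_conj_diag_map => //.
  by rewrite -trPdP -Md.
- by rewrite !mulmxA mulmxtVK // -(mulmxA _ (diag_mx s) (diag_mx s)) ss.
Qed.

Lemma unitarily_equiv_symmetric_of_intertwiner n (T M : 'M[C]_n) :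
  M \is unitarymx -> M^T = M -> M *m map_mx conjC T = T ^t* *m M ->
  exists S : 'M[C]_n, complex_symmetric S /\ unitarily_equiv T S.
Proof.
move=> MU MT MTc.
have [N [NU NT NNM]] := symmetric_unitary_sqrt MU MT.
have NtC : N ^t* = map_mx conjC N by rewrite NT.
have NNc : N *m map_mx conjC N = 1%:M by rewrite -NtC; apply/unitarymxP.
have NcN : map_mx conjC N *m N = 1%:M := mulmx1C NNc.
have TT : T^T = map_mx conjC M *m T *m M.
  have McM : map_mx conjC M *m M = 1%:M.
    by rewrite -{1}MT; exact: mulmx1C (unitarymxP MU).
  have := congr1 (map_mx conjC) MTc; rewrite !map_mxM /= !map_mxCK => ->.
  by rewrite -mulmxA McM mulmx1.
exists (map_mx conjC N *m T *m N); split.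
  rewrite /complex_symmetric !trmx_mul NT map_trmx NT TT -NNM map_mxM.
  by rewrite !mulmxA NNc mul1mx -!mulmxA NNc mulmx1.
exists (map_mx conjC N); split; first by apply/unitary_mxP; rewrite conjC_unitary.
rewrite adjmxE map_trmx map_mxCK NT.
by rewrite !mulmxA NNc mul1mx -mulmxA NNc mulmx1.
Qed.
End ConjugateTranspose.

Section BiorthogonalEigenbases.
Variables (C : numClosedFieldType) (n : nat) (T : 'M[C]_n) (lam : 'I_n -> C).
Variables (u v : 'I_n -> 'cV[C]_n) (alpha : 'I_n -> C).
Hypothesis lam_inj : injective lam.
Hypothesis u_unit : forall k, unit_vec (u k).
Hypothesis Tu : forall k, T *m u k = lam k *: u k.
Hypothesis v_unit : forall k, unit_vec (v k).
Hypothesis Tv : forall k, adjmx T *m v k = (lam k)^* *: v k.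
Hypothesis alpha_unit : forall k, `|alpha k| = 1.
Hypothesis inner_uv : forall i j : 'I_n, (i < j)%N ->
  inner (u i) (u j) = (alpha i)^* * alpha j * inner (v j) (v i).

Local Open Scope sesquilinear_scope.
Local Notation U := (mx_of_cols u).
Local Notation V := (mx_of_cols v).
Local Notation Ubar := (map_mx conjC U).
Local Notation D := (diag_mx (\row_k alpha k)).
Local Notation Lbar := (diag_mx (\row_k (lam k)^*)).
Local Notation M := (V *m D *m invmx Ubar).

Lemma inner_uv_all i j :
  inner (u i) (u j) = (alpha i)^* * alpha j * inner (v j) (v i).
Proof.
case: (ltngtP i j) => [/inner_uv //|/inner_uv uv|/val_inj <-].
  by rewrite -inner_conj uv !rmorphM /= conjCK inner_conj [alpha j * _]mulrC.
by rewrite (u_unit i) (v_unit i) mulr1 mulrC -normCK alpha_unit expr1n.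
Qed.

Lemma eigbasis_unit : U \in unitmx.
Proof.
apply: (eigenvector_cols_unitmx (A := T) lam_inj) => k; rewrite col_mx_of_cols.
  apply/eqP => uk0; move: (u_unit k); rewrite /unit_vec /inner uk0 big1 => [/eqP|i _].
    by rewrite eq_sym oner_eq0.
  by rewrite mxE mul0r.
exact: Tu.
Qed.

Lemma Ubar_unit : Ubar \in unitmx.
Proof. by rewrite map_unitmx eigbasis_unit. Qed.

Lemma gram_VD : (V *m D) ^t* *m (V *m D) = Ubar ^t* *m Ubar.
Proof.
have colVD k : col k (V *m D) = alpha k *: v k.
  by apply/colP => r; rewrite mul_mx_diag !mxE mulrC.
apply/matrixP => i j; rewrite !mulmx_trmxC_inner -!map_col !col_mx_of_cols.
by rewrite !colVD innerZ (inner_map_conj (u j)) inner_uv_all [alpha j * _]mulrC.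
Qed.

Lemma conj_eigbasis : map_mx conjC T *m Ubar = Ubar *m Lbar.
Proof.
rewrite -map_mxM (mx_of_cols_eigen Tu) map_mxM map_diag_mx.
by congr (_ *m diag_mx _); apply/rowP => k; rewrite !mxE.
Qed.

Lemma adj_eigbasis : T ^t* *m V = V *m Lbar.
Proof. by apply: mx_of_cols_eigen => k; rewrite -adjmxE. Qed.

Lemma intertwiner_unitary : M \is unitarymx.
Proof. exact: unitarymx_mulmxV Ubar_unit gram_VD. Qed.

Lemma intertwiner_sym : M^T = M.
Proof.
apply: symmetric_mulmxV Ubar_unit _; rewrite mulmxA.
have ZLbar : comm_mx (Ubar^T *m V) Lbar.
  rewrite /comm_mx -mulmxA -adj_eigbasis !mulmxA; congr (_ *m _).
  have := congr1 trmx conj_eigbasis; rewrite !trmx_mul tr_diag_mx => <-.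
  by congr (_ *m _); apply/matrixP => i j; rewrite !mxE.
have /diag_mxP [z ->] : is_diag_mx (Ubar^T *m V).
  apply: comm_diag_mx_is_diag ZLbar => i j; rewrite !mxE.
  by move=> /(can_inj conjCK) /lam_inj.
by rewrite trmx_mul !tr_diag_mx diag_mxC.
Qed.

Lemma intertwiner_conj : M *m map_mx conjC T = T ^t* *m M.
Proof.
have MUbar : M *m Ubar = V *m D by rewrite mulmxKV ?Ubar_unit.
apply: (can_inj (mulmxK Ubar_unit)); rewrite /= -(mulmxA M) conj_eigbasis mulmxA MUbar.
by rewrite -(mulmxA (T ^t*)) MUbar mulmxA adj_eigbasis -!mulmxA diag_mxC.
Qed.

Theorem biorthogonal_eigenbases_symmetric :
  exists S : 'M[C]_n, complex_symmetric S /\ unitarily_equiv T S.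
Proof.
exact: unitarily_equiv_symmetric_of_intertwiner
  intertwiner_unitary intertwiner_sym intertwiner_conj.
Qed.

End BiorthogonalEigenbases.

Unset Implicit Arguments.

Theorem lemma3 (R : realType) (n : nat) (T : 'M[R[i]]_n)
  (lam : 'I_n -> R[i]) (u v : 'I_n -> 'cV[R[i]]_n) (alpha : 'I_n -> R[i]) :
  injective lam ->
  (forall k, unit_vec (u k)) ->
  (forall k, T *m u k = lam k *: u k) ->
  (forall k, unit_vec (v k)) ->
  (forall k, adjmx T *m v k = (lam k)^* *: v k) ->
  (forall k, `|alpha k| = 1) ->
  (forall i j : 'I_n, (i < j)%N ->
     inner (u i) (u j) = (alpha i)^* * alpha j * inner (v j) (v i)) ->
  exists S : 'M[R[i]]_n, complex_symmetric S /\ unitarily_equiv T S.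
Proof. exact: biorthogonal_eigenbases_symmetric. Qed.
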